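(* The Steiner circumellipse $\mathcal{E}'$ of $T'=P_1'P_2'P_3'$ is centered at $C_2=\left(-\frac{a^2+b^2}{2a}\cos u,-\frac{a^2+b^2}{2b}\sin u\right)$, has axes parallel to the coordinate axes, with semi-axis $\frac{3c^2}{2a}$ in the $x$-direction and $\frac{3c^2}{2b}$ in the $y$-direction. Hence $\mathcal{E}'$ is similar to the copy of $\mathcal{E}$ rotated by $90^\circ$ about $O$, its area $\frac{9\pi c^4}{4ab}$ is independent of $u$, the ratio of the areas of $\mathcal{E}'$ and $\mathcal{E}$ is $\frac{9c^4}{4a^2b^2}$, and $\mathcal{E}'$ is congruent to $\mathcal{E}$ exactly when $a/b=(1+\sqrt{10})/3$.
   Context: Let $a>b>0$ and $c>0$ with $c^2=a^2-b^2$. Let $\mathcal{E}$ be the ellipse $x^2/a^2+y^2/b^2=1$ with center $O=(0,0)$. Fix $u\in\mathbb{R}$. Let $\Delta_u(t)=(x_u(t),y_u(t))$, where $x_u(t)=\frac1a\big(c^2(1+\cos(t+u))\cos t-a^2\cos u\big)$ and $y_u(t)=\frac1b\big(c^2\cos t\sin(t+u)-c^2\sin t-a^2\sin u\big)$ (the negative pedal curve of $\mathcal{E}$ with respect to $M=(a\cos u,b\sin u)$). For $i=1,2,3$ let $t_i=-u/3-2\pi(i-1)/3$ and $P_i'=\Delta_u(t_i)$ (the cusps). The Steiner circumellipse of a triangle is the unique ellipse through its three vertices centered at its centroid. *)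

From HB Require Import structures.
From mathcomp Require Import all_boot all_order all_algebra.
From mathcomp Require Import all_classical all_reals all_analysis.
Set Implicit Arguments. Unset Strict Implicit. Unset Printing Implicit Defensive.
Import Order.TTheory GRing.Theory Num.Theory.
Local Open Scope classical_set_scope.
Local Open Scope ring_scope.

Section Defs.
Variable R : realType.
Notation pt := (R * R)%type.

(* the negative pedal curve Delta_u(t) of the ellipse x^2/a^2+y^2/b^2=1 *)
Definition Delta (a b c u t : R) : pt :=
  ( (c ^+ 2 * (1 + cos (t + u)) * cos t - a ^+ 2 * cos u) / a,
    (c ^+ 2 * cos t * sin (t + u) - c ^+ 2 * sin t - a ^+ 2 * sin u) / b ).

Definition cusp_t (u : R) (i : nat) : R := - (u / 3) - 2 * pi * (i.-1)%:R / 3.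
Definition cusp (a b c u : R) (i : nat) : pt := Delta a b c u (cusp_t u i).

Definition centroid (P1 P2 P3 : pt) : pt :=
  ((P1.1 + P2.1 + P3.1) / 3, (P1.2 + P2.2 + P3.2) / 3).

(* an ellipse with center C: {p | al dx^2 + 2 be dx dy + ga dy^2 = 1},
   with a positive definite quadratic form *)
Definition ellipse_with_center (E : set pt) (C : pt) : Prop :=
  exists al be ga : R, 0 < al /\ 0 < al * ga - be ^+ 2 /\
    E = [set p | al * (p.1 - C.1) ^+ 2 + 2 * be * (p.1 - C.1) * (p.2 - C.2)
                 + ga * (p.2 - C.2) ^+ 2 = 1].

Definition steiner_circumellipse (P1 P2 P3 : pt) (E : set pt) : Prop :=
  ellipse_with_center E (centroid P1 P2 P3) /\ E P1 /\ E P2 /\ E P3.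

Definition axis_ellipse (h k A B : R) : set pt :=
  [set p | ((p.1 - h) / A) ^+ 2 + ((p.2 - k) / B) ^+ 2 = 1].
Definition axis_ellipse_region (h k A B : R) : set pt :=
  [set p | ((p.1 - h) / A) ^+ 2 + ((p.2 - k) / B) ^+ 2 <= 1].

Definition rot90 (p : pt) : pt := (- p.2, p.1).

Definition dist2 (p q : pt) : R := (p.1 - q.1) ^+ 2 + (p.2 - q.2) ^+ 2.

Definition maps_onto (f : pt -> pt) (S T : set pt) : Prop := f @` S = T.

Definition are_similar (S T : set pt) : Prop :=
  exists (f : pt -> pt) (k : R), 0 < k /\
    (forall p q, dist2 (f p) (f q) = k ^+ 2 * dist2 p q) /\ maps_onto f S T.

Definition are_congruent (S T : set pt) : Prop :=
  exists f : pt -> pt,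
    (forall p q, dist2 (f p) (f q) = dist2 p q) /\ maps_onto f S T.

Definition area (A : set pt) : \bar R :=
  ((@lebesgue_measure R) \x (@lebesgue_measure R))%E A.

End Defs.

From HB Require Import structures.
From mathcomp Require Import all_boot all_order all_algebra.
From mathcomp Require Import all_classical all_reals all_analysis.
From mathcomp Require Import ring lra.
Import Order.TTheory GRing.Theory Num.Theory numFieldNormedType.Exports.
Local Open Scope classical_set_scope.
Local Open Scope ring_scope.

(* With A' = 3c^2/(2a), B' = 3c^2/(2b) and C2 as in the statement, the cusp
   Delta_u(t_i) equals C2 + (A' cos t_i, - B' sin t_i): at a cusp 3 t_i = -u
   modulo 2 pi, and the double and triple angle formulas collapse Delta_u.  So
   the three cusps lie on the axis-parallel ellipse E' with centre C2 and
   semi-axes A', B', at parameters t_1, t_1 - 2pi/3, t_1 - 4pi/3.  Parameters a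
   third of a turn apart have vanishing cosine and sine sums, so C2 is the
   centroid, and pairwise non-proportional directions, so a centred conic
   through the three points has the quadratic form of E' (a binary quadratic
   form vanishing in three independent directions is zero).  Since
   (A', B') = k (b, a) with k = 3c^2/(2ab), E' is the image of the rotated E
   under a homothety; its area pi A' B' is computed by Fubini and the
   substitution x = h - A cos t; and a congruence E ~ E' forces equal major
   axes (the diameter is an isometry invariant), i.e. k = 1, which is the
   quadratic condition 3 (a/b)^2 - 2 (a/b) - 3 = 0. *)

(* A binary quadratic form vanishing at three pairwise non-proportional
   vectors is zero (Cramer's rule on the 3x3 system for its coefficients). *)
Lemma binary_form_eq0 {F : fieldType} {al be ga x1 y1 x2 y2 x3 y3 : F} :
  (x1 * y2 - x2 * y1) * (x1 * y3 - x3 * y1) * (x2 * y3 - x3 * y2) != 0 ->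
  al * x1 ^+ 2 + be * (x1 * y1) + ga * y1 ^+ 2 = 0 ->
  al * x2 ^+ 2 + be * (x2 * y2) + ga * y2 ^+ 2 = 0 ->
  al * x3 ^+ 2 + be * (x3 * y3) + ga * y3 ^+ 2 = 0 ->
  [/\ al = 0, be = 0 & ga = 0].
Proof.
set d := _ * _ * _ => d0.
pose Q x y := al * x ^+ 2 + be * (x * y) + ga * y ^+ 2.
move=> Q1 Q2 Q3; change (Q x1 y1 = 0) in Q1; change (Q x2 y2 = 0) in Q2;
  change (Q x3 y3 = 0) in Q3.
have cancel_d v : d * v = 0 -> v = 0.
  by move/eqP; rewrite mulf_eq0 (negbTE d0) => /eqP.
split; apply: cancel_d.
- have -> : d * al = y2 * y3 * (x2 * y3 - x3 * y2) * Q x1 y1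
     - y1 * y3 * (x1 * y3 - x3 * y1) * Q x2 y2
     + y1 * y2 * (x1 * y2 - x2 * y1) * Q x3 y3 by rewrite /d /Q; ring.
  by rewrite Q1 Q2 Q3; ring.
- have -> : d * be = - (x2 * y3 - x3 * y2) * (x2 * y3 + x3 * y2) * Q x1 y1
     + (x1 * y3 - x3 * y1) * (x1 * y3 + x3 * y1) * Q x2 y2
     - (x1 * y2 - x2 * y1) * (x1 * y2 + x2 * y1) * Q x3 y3 by rewrite /d /Q; ring.
  by rewrite Q1 Q2 Q3; ring.
- have -> : d * ga = x2 * x3 * (x2 * y3 - x3 * y2) * Q x1 y1
     - x1 * x3 * (x1 * y3 - x3 * y1) * Q x2 y2
     + x1 * x2 * (x1 * y2 - x2 * y1) * Q x3 y3 by rewrite /d /Q; ring.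
  by rewrite Q1 Q2 Q3; ring.
Qed.

Section Trigonometry.
Context {R : realType}.

Lemma two_pi_mul (j : nat) : (pi *+ 2) *+ j = 2 * pi * j%:R :> R.
Proof. by rewrite -mulr_natr mulr2n; ring. Qed.

Lemma cos_sub_2pi_mul (j : nat) (x : R) : cos (x - 2 * pi * j%:R) = cos x.
Proof. by have := periodicn (@cosD2pi R) j (x - 2 * pi * j%:R); rewrite two_pi_mul subrK. Qed.

Lemma sin_sub_2pi_mul (j : nat) (x : R) : sin (x - 2 * pi * j%:R) = sin x.
Proof. by have := periodicn (@sinD2pi R) j (x - 2 * pi * j%:R); rewrite two_pi_mul subrK. Qed.

Lemma cos_double (t : R) : cos (2 * t) = 2 * cos t ^+ 2 - 1.
Proof.
have s2 : sin t ^+ 2 = 1 - cos t ^+ 2 by rewrite sin2cos2.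
by rewrite (_ : 2 * t = t + t) ?cosD; ring: s2.
Qed.

Lemma sin_double (t : R) : sin (2 * t) = 2 * sin t * cos t.
Proof. by rewrite (_ : 2 * t = t + t) ?sinD; ring. Qed.

Lemma cos_triple (t : R) : cos (3 * t) = 4 * cos t ^+ 3 - 3 * cos t.
Proof.
have s2 : sin t ^+ 2 = 1 - cos t ^+ 2 by rewrite sin2cos2.
by rewrite (_ : 3 * t = t + t + t) ?(cosD, sinD); ring: s2.
Qed.

Lemma sin_triple (t : R) : sin (3 * t) = 3 * sin t - 4 * sin t ^+ 3.
Proof.
have c2 : cos t ^+ 2 = 1 - sin t ^+ 2 by rewrite cos2sin2.
by rewrite (_ : 3 * t = t + t + t) ?(cosD, sinD); ring: c2.
Qed.

Lemma sin_sub_cross (x y : R) : cos x * sin y - cos y * sin x = sin (y - x).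
Proof. by rewrite sinB; ring. Qed.

Local Notation tau3 := (2 * pi / 3 : R).

(* A third of a turn: cos = -1/2 (as the root of 4X^3 - 3X - 1 below 1) and sin > 0. *)
Lemma third_turn : cos tau3 = - 1 / 2 /\ 0 < sin tau3.
Proof.
have pi0 := @pi_gt0 R.
have tau3_gt0 : 0 < tau3 by lra.
have tau3_ltpi : tau3 < pi by lra.
have c3 : 4 * cos tau3 ^+ 3 - 3 * cos tau3 = 1.
  by rewrite -cos_triple (_ : 3 * tau3 = pi *+ 2) ?cos2pi // mulr2n; field.
have c_lt1 : cos tau3 < 1.
  have in_0pi (x : R) : 0 <= x <= pi -> x \in `[0, pi] by rewrite in_itv.
  by rewrite -[X in _ < X]cos0 ltr_cos ?in_0pi //; apply/andP; split; lra.
split; last by apply: sin_gt0_pi; rewrite tau3_gt0 tau3_ltpi.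
have e : (cos tau3 - 1) * (2 * cos tau3 + 1) ^+ 2 = 4 * cos tau3 ^+ 3 - 3 * cos tau3 - 1.
  by ring.
move: e; rewrite c3 subrr => /eqP; rewrite mulf_eq0 sqrf_eq0 => /orP [|] /eqP; lra.
Qed.

Lemma third_turn_sums (phi : R) :
  cos phi + cos (phi - tau3) + cos (phi - tau3 - tau3) = 0 /\
  sin phi + sin (phi - tau3) + sin (phi - tau3 - tau3) = 0.
Proof.
have [cw _] := third_turn.
have r2 : (2 * sin tau3) ^+ 2 = 3 by rewrite exprMn sin2cos2 cw; field.
(* field only uses polynomial hypotheses, so work with r = 2 sin tau3, r^2 = 3. *)
rewrite !(cosB, sinB) cw (_ : sin tau3 = (2 * sin tau3) / 2); last by field.
move: (2 * sin tau3) r2 => r r2.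
by split; field: r2.
Qed.

Lemma third_turn_sin_diffs (phi : R) :
  sin ((phi - tau3) - phi) * sin ((phi - tau3 - tau3) - phi)
  * sin ((phi - tau3 - tau3) - (phi - tau3)) != 0.
Proof.
have [cw sw] := third_turn.
have d1 : phi - tau3 - phi = - tau3 by ring.
have d2 : phi - tau3 - tau3 - phi = - (2 * tau3) by ring.
have d3 : phi - tau3 - tau3 - (phi - tau3) = - tau3 by ring.
rewrite d1 d2 d3 !sinN sin_double cw (_ : 2 * sin tau3 * (-1 / 2) = - sin tau3).
  by rewrite !mulf_neq0 ?oppr_eq0 ?gt_eqF.
by field.
Qed.
End Trigonometry.

Section CenteredConics.
Context {R : realType}.
Implicit Types (h k A B al be ga phi : R).

Definition centered_conic al be ga (C : R * R) : set (R * R) :=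
  [set p | al * (p.1 - C.1) ^+ 2 + 2 * be * (p.1 - C.1) * (p.2 - C.2)
           + ga * (p.2 - C.2) ^+ 2 = 1].

Definition ellipse_point h k A B phi : R * R := (h + A * cos phi, k - B * sin phi).

Lemma ellipse_point_on h k A B phi : A != 0 -> B != 0 ->
  axis_ellipse h k A B (ellipse_point h k A B phi).
Proof.
move=> A0 B0; rewrite /axis_ellipse /ellipse_point /= -[RHS](cos2Dsin2 phi).
by congr (_ + _); field.
Qed.

Lemma axis_ellipse_conic h k A B : A != 0 -> B != 0 ->
  axis_ellipse h k A B = centered_conic (A ^+ 2)^-1 0 (B ^+ 2)^-1 (h, k).
Proof.
move=> A0 B0; rewrite /axis_ellipse /centered_conic /=.
by apply/funext => p; congr (_ = _); field; apply/andP.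
Qed.

Lemma inv_sqr_gt0 (x : R) : x != 0 -> 0 < (x ^+ 2)^-1.
Proof. by move=> x0; rewrite invr_gt0 exprn_even_gt0 // x0 orbT. Qed.

Lemma axis_ellipse_centered h k A B : A != 0 -> B != 0 ->
  ellipse_with_center (axis_ellipse h k A B) (h, k).
Proof.
move=> A0 B0; exists (A ^+ 2)^-1, 0, (B ^+ 2)^-1.
rewrite axis_ellipse_conic // expr0n /= subr0.
split; first exact: inv_sqr_gt0.
by split; first rewrite mulr_gt0 ?inv_sqr_gt0.
Qed.

(* A conic centred at (h, k) through three points of the axis-parallel
   ellipse (h, k; A, B) with pairwise non-parallel parameters is that ellipse:
   its form minus the ellipse's form vanishes in three independent directions. *)
Lemma conic_through_ellipse_points h k A B al be ga phi1 phi2 phi3 :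
  A != 0 -> B != 0 ->
  sin (phi2 - phi1) * sin (phi3 - phi1) * sin (phi3 - phi2) != 0 ->
  centered_conic al be ga (h, k) (ellipse_point h k A B phi1) ->
  centered_conic al be ga (h, k) (ellipse_point h k A B phi2) ->
  centered_conic al be ga (h, k) (ellipse_point h k A B phi3) ->
  centered_conic al be ga (h, k) = axis_ellipse h k A B.
Proof.
move=> A0 B0 sin_diffs P1 P2 P3.
have on_conic phi : centered_conic al be ga (h, k) (ellipse_point h k A B phi) ->
    (al * A ^+ 2 - 1) * cos phi ^+ 2 + (- (2 * be * A * B)) * (cos phi * sin phi)
    + (ga * B ^+ 2 - 1) * sin phi ^+ 2 = 0.
  by rewrite /centered_conic /ellipse_point /= => conic_eq; have := cos2Dsin2 phi; lra.
rewrite -!sin_sub_cross in sin_diffs.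
have [eal ebe ega] := binary_form_eq0 sin_diffs (on_conic _ P1) (on_conic _ P2) (on_conic _ P3).
have inv_sqr (x y : R) : x != 0 -> y * x ^+ 2 - 1 = 0 -> y = (x ^+ 2)^-1.
  move=> x0 e; apply: (mulIf (expf_neq0 2 x0)); rewrite mulVf ?expf_neq0 //; lra.
have be0 : be = 0.
  have : be * (A * B) = 0 by lra.
  by move/eqP; rewrite mulf_eq0 (negbTE (mulf_neq0 A0 B0)) orbF => /eqP.
by rewrite (inv_sqr A al A0 eal) (inv_sqr B ga B0 ega) be0 axis_ellipse_conic.
Qed.

Lemma steiner_ellipse_points h k A B phi1 phi2 phi3 (F : set (R * R)) :
  A != 0 -> B != 0 ->
  sin (phi2 - phi1) * sin (phi3 - phi1) * sin (phi3 - phi2) != 0 ->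
  cos phi1 + cos phi2 + cos phi3 = 0 -> sin phi1 + sin phi2 + sin phi3 = 0 ->
  steiner_circumellipse (ellipse_point h k A B phi1) (ellipse_point h k A B phi2)
    (ellipse_point h k A B phi3) F <-> F = axis_ellipse h k A B.
Proof.
move=> A0 B0 sin_diffs sum_cos sum_sin.
have centroid_hk : centroid (ellipse_point h k A B phi1) (ellipse_point h k A B phi2)
    (ellipse_point h k A B phi3) = (h, k).
  have sx : A * (cos phi1 + cos phi2 + cos phi3) = 0 by rewrite sum_cos mulr0.
  have sy : B * (sin phi1 + sin phi2 + sin phi3) = 0 by rewrite sum_sin mulr0.
  by rewrite /centroid /ellipse_point /=; congr pair; lra.
rewrite /steiner_circumellipse centroid_hk; split.
- case=> -[al [be [ga [_ [_ ->]]]]] [P1 [P2 P3]].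
  exact: conic_through_ellipse_points P1 P2 P3.
- move=> ->; split; first exact: axis_ellipse_centered.
  by split; [|split]; apply: ellipse_point_on.
Qed.
End CenteredConics.

Section Cusps.
Context {R : realType}.

Lemma Delta_cusp (a b c u t : R) (j : nat) : a != 0 -> b != 0 ->
  c ^+ 2 = a ^+ 2 - b ^+ 2 -> u = - (3 * t) - 2 * pi * j%:R ->
  Delta a b c u t =
    ellipse_point (- ((a ^+ 2 + b ^+ 2) / (2 * a)) * cos u)
      (- ((a ^+ 2 + b ^+ 2) / (2 * b)) * sin u)
      (3 * c ^+ 2 / (2 * a)) (3 * c ^+ 2 / (2 * b)) t.
Proof.
move=> a0 b0 hc hu.
have tu : t + u = - (2 * t) - 2 * pi * j%:R by rewrite hu; ring.
have cu : cos u = cos (3 * t) by rewrite hu cos_sub_2pi_mul cosN.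
have su : sin u = - sin (3 * t) by rewrite hu sin_sub_2pi_mul sinN.
have ctu : cos (t + u) = cos (2 * t) by rewrite tu cos_sub_2pi_mul cosN.
have stu : cos t * sin (t + u) = - 2 * sin t + 2 * sin t ^+ 3.
  have c2 : cos t ^+ 2 = 1 - sin t ^+ 2 by rewrite cos2sin2.
  by rewrite tu sin_sub_2pi_mul sinN sin_double; ring: c2.
rewrite /Delta /ellipse_point ctu -[c ^+ 2 * cos t * _]mulrA stu.
rewrite cu su cos_double cos_triple sin_triple hc.
by congr pair; field.
Qed.

Lemma cusp_on_ellipse (a b c u : R) (i : nat) : a != 0 -> b != 0 ->
  c ^+ 2 = a ^+ 2 - b ^+ 2 ->
  cusp a b c u i =
    ellipse_point (- ((a ^+ 2 + b ^+ 2) / (2 * a)) * cos u)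
      (- ((a ^+ 2 + b ^+ 2) / (2 * b)) * sin u)
      (3 * c ^+ 2 / (2 * a)) (3 * c ^+ 2 / (2 * b)) (cusp_t u i).
Proof.
move=> a0 b0 hc; apply: (@Delta_cusp a b c u _ i.-1) => //.
by rewrite /cusp_t; field.
Qed.

Lemma cusp_t_spacing (u : R) :
  cusp_t u 2 = cusp_t u 1 - 2 * pi / 3 /\
  cusp_t u 3 = cusp_t u 1 - 2 * pi / 3 - 2 * pi / 3.
Proof. by rewrite /cusp_t /=; split; field. Qed.
End Cusps.

Section AxisEllipseMotions.
Context {R : realType}.
Implicit Types (h l k a b A B M : R) (p q : R * R).

Definition rot_scale h l k p : R * R := (h - k * p.2, l + k * p.1).

Lemma rot_scale_dist2 h l k p q :
  dist2 (rot_scale h l k p) (rot_scale h l k q) = k ^+ 2 * dist2 p q.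
Proof. by rewrite /dist2 /=; ring. Qed.

Lemma rot_scale_axis_ellipse h l k a b : k != 0 -> a != 0 -> b != 0 ->
  maps_onto (rot_scale h l k) (axis_ellipse 0 0 a b) (axis_ellipse h l (k * b) (k * a)).
Proof.
move=> k0 a0 b0; apply/seteqP; split.
- move=> _ [p Ep <-]; rewrite /axis_ellipse /rot_scale /= -Ep addrC.
  by congr (_ + _); field; apply/andP.
- move=> q Eq; exists ((q.2 - l) / k, (h - q.1) / k).
    by rewrite /axis_ellipse /= -Eq addrC; congr (_ + _); field; apply/andP.
  by case: q {Eq} => q1 q2; rewrite /rot_scale /=; congr pair; field.
Qed.

Lemma rot90_axis_ellipse_similar h l k a b : 0 < k -> a != 0 -> b != 0 ->
  are_similar (@rot90 R @` axis_ellipse 0 0 a b) (axis_ellipse h l (k * b) (k * a)).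
Proof.
move=> k_gt0 a0 b0; exists (fun p => (h + k * p.1, l + k * p.2)), k.
split=> //; split; first by move=> p q; rewrite /dist2 /=; ring.
rewrite /maps_onto image_comp.
have -> : (fun p : R * R => (h + k * p.1, l + k * p.2)) \o @rot90 R = rot_scale h l k.
  by apply/funext => p; rewrite /rot_scale /rot90 /=; congr pair; ring.
exact: rot_scale_axis_ellipse (lt0r_neq0 k_gt0) a0 b0.
Qed.

Lemma axis_ellipse_swap_congruent h l a b : a != 0 -> b != 0 ->
  are_congruent (axis_ellipse 0 0 a b) (axis_ellipse h l b a).
Proof.
move=> a0 b0; exists (rot_scale h l 1); split.
  by move=> p q; rewrite rot_scale_dist2 expr1n mul1r.
by rewrite -[b in axis_ellipse h l b]mul1r -[a in axis_ellipse h l _ a]mul1r;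
  apply: rot_scale_axis_ellipse; rewrite ?oner_neq0.
Qed.

Lemma axis_ellipse_near_center {h l A B M p} : 0 < A -> 0 < B -> A <= M -> B <= M ->
  axis_ellipse h l A B p -> (p.1 - h) ^+ 2 + (p.2 - l) ^+ 2 <= M ^+ 2.
Proof.
move=> A0 B0 AM BM; rewrite /axis_ellipse /=.
set x := (p.1 - h) / A; set y := (p.2 - l) / B => on_E.
have -> : p.1 - h = A * x by rewrite /x; field; rewrite gt_eqF.
have -> : p.2 - l = B * y by rewrite /y; field; rewrite gt_eqF.
have : A ^+ 2 <= M ^+ 2 by nra.
have : B ^+ 2 <= M ^+ 2 by nra.
have := sqr_ge0 x; have := sqr_ge0 y; nra.
Qed.

Lemma axis_ellipse_diameter {h l A B M p q} : 0 < A -> 0 < B -> A <= M -> B <= M ->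
  axis_ellipse h l A B p -> axis_ellipse h l A B q -> dist2 p q <= 4 * M ^+ 2.
Proof.
move=> A0 B0 AM BM Ep Eq.
have := axis_ellipse_near_center A0 B0 AM BM Ep.
have := axis_ellipse_near_center A0 B0 AM BM Eq.
have := sqr_ge0 ((p.1 - h) + (q.1 - h)); have := sqr_ge0 ((p.2 - l) + (q.2 - l)).
rewrite /dist2; nra.
Qed.

(* Congruent axis-parallel ellipses have the same major semi-axis: the major
   axis endpoints realise the diameter, which isometries preserve. *)
Lemma congruent_axis_ellipses_major {h l a b A B} :
  0 < b -> b <= a -> 0 < A -> A <= B ->
  are_congruent (axis_ellipse 0 0 a b) (axis_ellipse h l A B) -> a = B.
Proof.
move=> b_gt0 ba A_gt0 AB [f [iso onto]].
have a_gt0 : 0 < a by apply: lt_le_trans ba.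
have B_gt0 : 0 < B by apply: lt_le_trans AB.
have [a0 b0 A0 B0] : [/\ a != 0, b != 0, A != 0 & B != 0] by rewrite !gt_eqF.
have image p : axis_ellipse 0 0 a b p -> axis_ellipse h l A B (f p).
  by move=> Ep; rewrite -onto; exists p.
have preimage q : axis_ellipse h l A B q -> exists2 p, axis_ellipse 0 0 a b p & f p = q.
  by rewrite -onto => -[p Ep <-]; exists p.
have E_right : axis_ellipse 0 0 a b (a, 0) by rewrite /axis_ellipse /=; field; apply/andP.
have E_left : axis_ellipse 0 0 a b (- a, 0) by rewrite /axis_ellipse /=; field; apply/andP.
have E'_top : axis_ellipse h l A B (h, l + B) by rewrite /axis_ellipse /=; field; apply/andP.
have E'_bot : axis_ellipse h l A B (h, l - B) by rewrite /axis_ellipse /=; field; apply/andP.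
have a_le_B : a ^+ 2 <= B ^+ 2.
  have := axis_ellipse_diameter A_gt0 B_gt0 AB (lexx B) (image _ E_right) (image _ E_left).
  by rewrite iso /dist2 /=; lra.
have B_le_a : B ^+ 2 <= a ^+ 2.
  have [p Ep fp] := preimage _ E'_top; have [q Eq fq] := preimage _ E'_bot.
  have := axis_ellipse_diameter a_gt0 b_gt0 (lexx a) ba Ep Eq.
  by rewrite -iso fp fq /dist2 /=; lra.
nra.
Qed.
Lemma congruent_scaled_swap_iff {h l a b k} : 0 < b -> b < a -> 0 < k ->
  are_congruent (axis_ellipse 0 0 a b) (axis_ellipse h l (k * b) (k * a)) <-> k = 1.
Proof.
move=> b_gt0 b_lt_a k_gt0; have a_gt0 := lt_trans b_gt0 b_lt_a.
split=> [cong | ->]; last by rewrite !mul1r; apply: axis_ellipse_swap_congruent; rewrite gt_eqF.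
have kb_le_ka : k * b <= k * a by rewrite ler_pM2l // ltW.
have := congruent_axis_ellipses_major b_gt0 (ltW b_lt_a) (mulr_gt0 k_gt0 b_gt0) kb_le_ka cong.
by move/(congr1 (fun x => x / a)); rewrite mulfK ?divff ?gt_eqF.
Qed.
End AxisEllipseMotions.

Section EllipseArea.
Context {R : realType}.
Notation mu := (@lebesgue_measure R).

Lemma derivable_continuous {f : R -> R} : (forall x, derivable f x 1) -> continuous f.
Proof. by move=> df x; apply/differentiable_continuous/derivable1_diffP/df. Qed.

Lemma derivable_LRcontinuous (f : R -> R) (x y : R) :
  (forall z, derivable f z 1) -> derivable_oo_LRcontinuous f x y.
Proof.
move=> df; have cf := derivable_continuous df; split.
- by move=> z _; apply: df.
- by apply: cvg_at_right_filter; apply: cf.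
- by apply: cvg_at_left_filter; apply: cf.
Qed.

Lemma xsection_region_empty (h k A B x : R) : 1 - ((x - h) / A) ^+ 2 < 0 ->
  xsection (axis_ellipse_region h k A B) x = set0.
Proof.
move=> r_lt0; apply/seteqP; split => y //=.
rewrite /xsection /= inE /axis_ellipse_region /= => in_region.
have := sqr_ge0 ((y - k) / B); lra.
Qed.

Lemma xsection_region_interval (h k A B x : R) : 0 < B ->
  let s := Num.sqrt (1 - ((x - h) / A) ^+ 2) in 0 <= 1 - ((x - h) / A) ^+ 2 ->
  xsection (axis_ellipse_region h k A B) x = `[k - B * s, k + B * s]%classic.
Proof.
move=> B_gt0 s r_ge0.
have s2 : s ^+ 2 = 1 - ((x - h) / A) ^+ 2 by rewrite sqr_sqrtr.
have Bs_ge0 : 0 <= B * s by rewrite mulr_ge0 ?sqrtr_ge0 // ltW.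
have scaled y : (((y - k) / B) ^+ 2 <= s ^+ 2) = ((y - k) ^+ 2 <= (B * s) ^+ 2).
  by rewrite expr_div_n ler_pdivrMr ?exprn_gt0 // exprMn mulrC.
apply/seteqP; split => y /=; rewrite /xsection /= inE /axis_ellipse_region /= in_itv /=.
- move=> in_region; have : (y - k) ^+ 2 <= (B * s) ^+ 2 by rewrite -scaled s2; lra.
  by move=> sq; apply/andP; split; nra.
- move=> /andP [lo hi]; have : (y - k) ^+ 2 <= (B * s) ^+ 2 by nra.
  by rewrite -scaled s2; lra.
Qed.

Lemma xsection_region_measure (h k A B x : R) : 0 < B ->
  mu (xsection (axis_ellipse_region h k A B) x) =
  (2 * B * Num.sqrt (1 - ((x - h) / A) ^+ 2))%:E.
Proof.
move=> B_gt0; have [r_lt0|r_ge0] := ltP (1 - ((x - h) / A) ^+ 2) 0.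
  by rewrite xsection_region_empty // measure0 ltr0_sqrtr // mulr0.
rewrite xsection_region_interval // lebesgue_measure_itv /= lte_fin.
set s := Num.sqrt _; have s_ge0 : 0 <= s := sqrtr_ge0 _.
have [_|] := ltP (k - B * s) (k + B * s); first by rewrite -EFinD; congr (EFin _); ring.
move=> le; have -> : s = 0 by nra.
by rewrite mulr0.
Qed.

Lemma is_derive_shifted_cos (h A x : R) :
  is_derive x 1 (fun t => h - A * cos t) (A * sin x).
Proof. by apply: is_derive_eq; rewrite /GRing.scale /=; ring. Qed.

Lemma is_derive_sin_sqr_primitive (A B x : R) :
  is_derive x 1 (fun t => A * B * (t - sin t * cos t)) (2 * A * B * sin x ^+ 2).
Proof.
apply: is_derive_eq; rewrite /GRing.scale /=.
have c2 : cos x * cos x = 1 - sin x ^+ 2 by rewrite -expr2 cos2sin2.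
by rewrite c2; ring.
Qed.

Lemma chord_continuous (h A B : R) :
  continuous (fun t : R => 2 * B * Num.sqrt (1 - ((t - h) / A) ^+ 2)).
Proof.
move=> x; pose q (t : R) := 1 - ((t - h) / A) ^+ 2.
have dq y : derivable q y 1 by apply: ex_derive.
apply: (@continuousM _ _ (cst (2 * B)) (Num.sqrt \o q)); first exact: cst_continuous.
by apply: continuous_comp; [exact: derivable_continuous dq x | exact: sqrt_continuous].
Qed.

Section Integrals.
Local Open Scope ereal_scope.

Lemma integral_sin_sqr (A B : R) :
  \int[mu]_(x in `[0%R, pi]) (2 * A * B * sin x ^+ 2)%:E = (pi * A * B)%:E.
Proof.
rewrite (@continuous_FTC2 R _ (fun t => A * B * (t - sin t * cos t))%R).
- by rewrite sin0 sinpi -EFinB; congr (EFin _); ring.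
- exact: pi_gt0.
- by apply/continuous_subspaceT/derivable_continuous => x; apply: ex_derive.
- by apply: derivable_LRcontinuous => x; apply: ex_derive; exact: is_derive_sin_sqr_primitive.
- by move=> x _; rewrite derive1E; case: (is_derive_sin_sqr_primitive A B x).
Qed.

(* The substitution x = h - A cos t, t in [0, pi], turns the chord length
   into 2 A B sin^2 t. *)
Lemma integral_chord (h A B : R) : (0 < A)%R ->
  \int[mu]_(x in `[(h - A)%R, (h + A)%R]) (2 * B * Num.sqrt (1 - ((x - h) / A) ^+ 2))%:E
  = (pi * A * B)%:E.
Proof.
move=> A_gt0.
pose F (t : R) := (h - A * cos t)%R.
have F' : derive1 F = (fun x => A * sin x)%R.
  by apply/funext => x; rewrite derive1E; case: (is_derive_shifted_cos h A x).
have cF' : continuous (fun x : R => A * sin x)%R.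
  by apply: derivable_continuous => x; apply: ex_derive.
have F0 : F 0%R = (h - A)%R by rewrite /F cos0 mulr1.
have Fpi : F pi = (h + A)%R by rewrite /F cospi mulrN1 opprK.
rewrite -F0 -Fpi integration_by_substitution_increasing.
- rewrite -(integral_sin_sqr A B); apply: eq_integral => x.
  rewrite inE /= in_itv /= => /andP [x_ge0 x_lepi].
  rewrite F' /F !fctE /= (_ : (h - A * cos x - h) / A = - cos x)%R; last by field; rewrite gt_eqF.
  rewrite sqrrN -sin2cos2 sqrtr_sqr ger0_norm; last by apply: sin_ge0_pi; rewrite x_ge0.
  by congr (EFin _); ring.
- exact: pi_ge0.
- move=> x y; rewrite !inE /= => xI yI xy.
  by rewrite /F ltrD2l ltrN2 ltr_pM2l // ltr_cos.
- by move=> x _; rewrite F'; apply: cF'.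
- by rewrite F'; apply/cvg_ex; exists (A * sin 0)%R; apply: cvg_at_right_filter; apply: cF'.
- by rewrite F'; apply/cvg_ex; exists (A * sin pi)%R; apply: cvg_at_left_filter; apply: cF'.
- by apply: derivable_LRcontinuous => x; apply: ex_derive; exact: is_derive_shifted_cos.
- exact/continuous_subspaceT/chord_continuous.
Qed.

Lemma area_as_chord_integral (h k A B : R) : (0 < A)%R -> (0 < B)%R ->
  area (axis_ellipse_region h k A B) =
  \int[mu]_(x in `[(h - A)%R, (h + A)%R]) (2 * B * Num.sqrt (1 - ((x - h) / A) ^+ 2))%:E.
Proof.
move=> A_gt0 B_gt0; rewrite /area.
transitivity (\int[mu]_x (2 * B * Num.sqrt (1 - ((x - h) / A) ^+ 2))%:E).
  by rewrite /product_measure1; apply: eq_integral => x _ /=; rewrite xsection_region_measure.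
rewrite [RHS]integral_mkcond; apply: eq_integral => x _; rewrite patchE.
case: ifPn => // /negP; rewrite inE /= in_itv /= => outside.
rewrite ltr0_sqrtr ?mulr0 //.
suff : (1 < ((x - h) / A) ^+ 2)%R by lra.
rewrite expr_div_n ltr_pdivlMr ?exprn_gt0 // mul1r.
have [lo|lo] := leP (h - A)%R x; last by nra.
have hi : (h + A < x)%R by rewrite ltNge; apply/negP => hi; apply: outside; rewrite lo hi.
nra.
Qed.
End Integrals.

Lemma area_axis_ellipse_region (h k A B : R) : 0 < A -> 0 < B ->
  area (axis_ellipse_region h k A B) = (pi * A * B)%:E.
Proof. by move=> A_gt0 B_gt0; rewrite area_as_chord_integral // integral_chord. Qed.
End EllipseArea.

Section AxisRatio.
Context {R : realType}.

Lemma ratio_quadratic_root (rho : R) : 0 < rho ->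
  3 * rho ^+ 2 - 2 * rho - 3 = 0 <-> rho = (1 + Num.sqrt 10) / 3.
Proof.
move=> rho_gt0.
have s_ge0 : 0 <= Num.sqrt 10 :> R := sqrtr_ge0 _.
have s2 : Num.sqrt 10 ^+ 2 = 10 :> R by rewrite sqr_sqrtr.
move: (Num.sqrt 10) s_ge0 s2 => s s_ge0 s2.
have factor : 3 * (3 * rho ^+ 2 - 2 * rho - 3) = (3 * rho - 1 - s) * (3 * rho - 1 + s).
  by ring: s2.
split=> [root | ->].
  by move/eqP: factor; rewrite root mulr0 eq_sym mulf_eq0 => /orP [] /eqP; nra.
have -> : 3 * ((1 + s) / 3) ^+ 2 - 2 * ((1 + s) / 3) - 3 = (s ^+ 2 - 10) / 3 by field.
by rewrite s2 subrr mul0r.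
Qed.

Lemma axis_ratio_condition (a b : R) : 0 < a -> 0 < b ->
  3 * (a ^+ 2 - b ^+ 2) / (2 * a * b) = 1 <-> a / b = (1 + Num.sqrt 10) / 3.
Proof.
move=> a_gt0 b_gt0; rewrite -ratio_quadratic_root ?divr_gt0 //.
have [a0 b0] : a != 0 /\ b != 0 by rewrite !gt_eqF.
have -> : 3 * (a / b) ^+ 2 - 2 * (a / b) - 3
    = (3 * (a ^+ 2 - b ^+ 2) / (2 * a * b) - 1) * (2 * a / b).
  by field; rewrite ?a0 ?b0.
have ab0 : 2 * a / b != 0 by rewrite gt_eqF // divr_gt0 ?mulr_gt0.
split=> [-> | /eqP]; first by rewrite subrr mul0r.
by rewrite mulf_eq0 (negbTE ab0) orbF subr_eq0 => /eqP.
Qed.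
End AxisRatio.

Theorem proposition4p3 (R : realType) (a b c u : R) :
  b < a -> 0 < b -> 0 < c -> c ^+ 2 = a ^+ 2 - b ^+ 2 ->
  let E := axis_ellipse 0 0 a b in
  let C2 := (- ((a ^+ 2 + b ^+ 2) / (2 * a)) * cos u,
             - ((a ^+ 2 + b ^+ 2) / (2 * b)) * sin u) in
  let E' := axis_ellipse C2.1 C2.2 (3 * c ^+ 2 / (2 * a)) (3 * c ^+ 2 / (2 * b)) in
  let E'reg := axis_ellipse_region C2.1 C2.2
                 (3 * c ^+ 2 / (2 * a)) (3 * c ^+ 2 / (2 * b)) in
  let Ereg := axis_ellipse_region 0 0 a b in
  (forall F : set (R * R),
     steiner_circumellipse (cusp a b c u 1) (cusp a b c u 2) (cusp a b c u 3) F
     <-> F = E') /\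
  are_similar (@rot90 R @` E) E' /\
  area E'reg = (9 * pi * c ^+ 4 / (4 * a * b))%:E /\
  fine (area E'reg) / fine (area Ereg) = 9 * c ^+ 4 / (4 * a ^+ 2 * b ^+ 2) /\
  (are_congruent E E' <-> a / b = (1 + Num.sqrt 10) / 3).
Proof.
move=> b_lt_a b_gt0 c_gt0 hc E C2 E' E'reg Ereg.
have a_gt0 : 0 < a := lt_trans b_gt0 b_lt_a.
have [a0 b0] : a != 0 /\ b != 0 by rewrite !gt_eqF.
pose k := 3 * c ^+ 2 / (2 * a * b).
have k_gt0 : 0 < k by rewrite divr_gt0 ?mulr_gt0 ?exprn_gt0.
have semi_x : 3 * c ^+ 2 / (2 * a) = k * b by rewrite /k; field; rewrite ?a0 ?b0.
have semi_y : 3 * c ^+ 2 / (2 * b) = k * a by rewrite /k; field; rewrite ?a0 ?b0.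
have area_E' : area E'reg = (pi * (k * b) * (k * a))%:E.
  by rewrite /E'reg semi_x semi_y area_axis_ellipse_region // mulr_gt0.
have area_E : area Ereg = (pi * a * b)%:E by exact: area_axis_ellipse_region.
split.
  move=> F; have [t2 t3] := cusp_t_spacing u.
  have [sum_cos sum_sin] := third_turn_sums (cusp_t u 1).
  rewrite !cusp_on_ellipse // t2 t3.
  apply: steiner_ellipse_points => //; last exact: third_turn_sin_diffs.
    by rewrite semi_x mulf_neq0 ?gt_eqF.
  by rewrite semi_y mulf_neq0 ?gt_eqF.
split; first by rewrite /E' semi_x semi_y; exact: rot90_axis_ellipse_similar.
split; first by rewrite area_E' /k; congr (EFin _); field; rewrite ?a0 ?b0.
split.
  have pi0 : pi != 0 :> R by rewrite gt_eqF // pi_gt0.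
  (* pi is abstracted so that field asks for p != 0 instead of unfolding pi. *)
  by rewrite area_E' area_E /= /k; move: pi pi0 => p p0; field; rewrite ?a0 ?b0 ?p0.
rewrite /E' semi_x semi_y.
apply: (iff_trans (congruent_scaled_swap_iff b_gt0 b_lt_a k_gt0)).
by rewrite /k hc; exact: axis_ratio_condition.
Qed.
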